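(* Let $S$ be an algebraic semigroup over an algebraically closed field $k$ and let $x \in S$. For $m>0$ let $\langle x^m \rangle$ denote the closure in $S$ of the set $\{x^{mj} : j > 0\}$. Assume that $S = \langle x \rangle = \langle x^n \rangle$ for all $n > 0$. Then $xS$ is dense in $S$, and $S$ is irreducible.
   Context: An algebraic semigroup is an algebraic variety over $k$ with an associative multiplication that is a morphism of varieties. Closures are taken in the Zariski topology. *)

From HB Require Import structures.
From mathcomp Require Import all_boot all_order all_algebra.
From mathcomp Require Import mpoly.
Set Implicit Arguments. Unset Strict Implicit. Unset Printing Implicit Defensive.
Import GRing.Theory.
Local Open Scope ring_scope.

Section Varieties.
Variable k : closedFieldType.

Definition kn (n : nat) := 'I_n -> k.

Definition zclosed (n : nat) (A : kn n -> Prop) : Prop :=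
  exists P : {mpoly k[n]} -> Prop,
    forall v, A v <-> (forall p, P p -> p.@[v] = 0).

Definition zopen (n : nat) (A : kn n -> Prop) : Prop :=
  zclosed (fun v => ~ A v).

Definition rel_open (n : nat) (V O : kn n -> Prop) : Prop :=
  exists W, zopen W /\ forall v, O v <-> (V v /\ W v).

Definition regular_fun (n : nat) (O : kn n -> Prop) (f : kn n -> k) : Prop :=
  forall x, O x -> exists W : kn n -> Prop, exists p q : {mpoly k[n]},
    [/\ zopen W, W x &
        forall y, O y -> W y -> q.@[y] != 0 /\ f y * q.@[y] = p.@[y]].

Definition regular_map (n m : nat) (O : kn n -> Prop) (g : kn n -> kn m) :=
  forall j : 'I_m, regular_fun O (fun v => g v j).

Definition kconcat (a b : nat) (u : kn a) (w : kn b) : kn (a + b) :=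
  fun t => match split t with inl i => u i | inr j => w j end.

(* An algebraic variety structure on a type S, given by a finite atlas of
   affine charts (bijections of subsets U_i onto Zariski-closed subsets of
   k^(dim i)) with open overlaps, regular transition maps, and the
   separatedness condition (the graph of each gluing is closed). *)
Definition chimg (S : Type) (n : nat) (U : S -> Prop) (c : S -> kn n)
  : kn n -> Prop := fun v => exists2 s, U s & c s = v.

Local Unset Implicit Arguments.
Record variety (S : Type) := Variety {
  ncharts : nat;
  cdim : 'I_ncharts -> nat;
  cdom : 'I_ncharts -> S -> Prop;
  chart : forall i, S -> kn (cdim i);
  cimg_closed : forall i, zclosed (chimg (cdom i) (chart i));
  chart_inj : forall i s t, cdom i s -> cdom i t -> chart i s = chart i t -> s = t;
  cdom_cover : forall s, exists i, cdom i s;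
  overlap_open : forall i j,
    rel_open (chimg (cdom i) (chart i)) (fun v => exists s, [/\ cdom i s, cdom j s & chart i s = v]);
  transition_regular : forall i j, exists g : kn (cdim i) -> kn (cdim j),
    regular_map (fun v => exists s, [/\ cdom i s, cdom j s & chart i s = v]) g /\
    (forall s, cdom i s -> cdom j s -> g (chart i s) = chart j s);
  separated : forall i j,
    zclosed (fun v => exists s, [/\ cdom i s, cdom j s &
                                  kconcat (chart i s) (chart j s) = v])
}.
Local Set Implicit Arguments.
Arguments ncharts {S} _.
Arguments cdim {S} _ _.
Arguments cdom {S} _ _ _.
Arguments chart {S} _ _ _ _.

Variables (S : Type) (X : variety S).

Definition vopen (W : S -> Prop) : Prop :=
  forall i, rel_open (chimg (cdom X i) (chart X i))
    (fun v => exists s, [/\ cdom X i s, W s & chart X i s = v]).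

Definition vclosed (C : S -> Prop) : Prop := vopen (fun s => ~ C s).

Definition vclosure (A : S -> Prop) : S -> Prop :=
  fun s => forall C, vclosed C -> (forall t, A t -> C t) -> C s.

Definition vdense (A : S -> Prop) : Prop := forall s, vclosure A s.

Definition virreducible : Prop :=
  (exists s : S, True) /\
  forall C1 C2, vclosed C1 -> vclosed C2 -> (forall s, C1 s \/ C2 s) ->
    (forall s, C1 s) \/ (forall s, C2 s).

(* product charts of S x S: (U_i x U_j) -> closed subset of k^(dim i + dim j) *)
Local Unset Implicit Arguments.
Definition pimg (i j : 'I_(ncharts X)) (P : S -> S -> Prop)
  : kn (cdim X i + cdim X j) -> Prop :=
  fun v => exists s t, [/\ cdom X i s, cdom X j t, P s t &
                          kconcat (chart X i s) (chart X j t) = v].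

Local Set Implicit Arguments.
(* mu : S x S -> S is a morphism of varieties: continuous for the Zariski
   topology of the product variety, and given by regular maps in charts *)
Definition vmorphism2 (mu : S -> S -> S) : Prop :=
  (forall W, vopen W -> forall i j,
      rel_open (pimg i j (fun _ _ => True)) (pimg i j (fun s t => W (mu s t)))) /\
  (forall i j l, exists g : kn (cdim X i + cdim X j) -> kn (cdim X l),
      regular_map (pimg i j (fun s t => cdom X l (mu s t))) g /\
      (forall s t, cdom X i s -> cdom X j t -> cdom X l (mu s t) ->
         g (kconcat (chart X i s) (chart X j t)) = chart X l (mu s t))).

End Varieties.

Definition algebraic_semigroup (k : closedFieldType) (S : Type)
  (X : variety k S) (mu : S -> S -> S) : Prop :=
  associative mu /\ vmorphism2 X mu.

(* x^m for m > 0 (x^m = mu x (mu x ... x), m factors) *)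
Definition spow (S : Type) (mu : S -> S -> S) (x : S) (m : nat) : S :=
  iter m.-1 (mu x) x.

Definition cyc_closure (k : closedFieldType) (S : Type) (X : variety k S)
  (mu : S -> S -> S) (x : S) (m : nat) : S -> Prop :=
  vclosure X (fun s => exists2 j, (0 < j)%N & s = spow mu x (m * j)).

(* Density: x^(2j) = x * x^(2j-1) lies in xS, and S = <x^2>.
   Irreducibility: each chart is noetherian (Dickson's lemma on leading monomials
   gives the ascending chain condition for vanishing ideals), so S is a finite
   union of irreducible closed subsets Y_1, ..., Y_r. Left multiplication by x
   is continuous, hence maps each Y_i into some Y_sigma(i). Iterating sigma on a
   finite set yields M > 0 such that every x^(Mj), j > 0, lies in one and the
   same Y_l; then S = <x^M> is contained in Y_l, which is irreducible. *)

From mathcomp Require Import all_boot all_order all_algebra.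
From mathcomp Require Import mpoly zify.
From Stdlib Require Import Classical ClassicalEpsilon FunctionalExtensionality.
Set Implicit Arguments. Unset Strict Implicit. Unset Printing Implicit Defensive.
Import Order.TTheory GRing.Theory.

Lemma ex_least_nat (P : nat -> Prop) :
  (exists n, P n) -> exists n, P n /\ forall m, P m -> n <= m.
Proof.
move=> [n Pn]; apply: NNPP => nomin; elim/ltn_ind: n Pn => n IH Pn.
apply: nomin; exists n; split=> // m Pm; rewrite leqNgt; apply/negP => mn.
exact: IH mn Pm.
Qed.

Lemma nondecreasing_subsequence (f : nat -> nat) : exists phi : nat -> nat,
  (forall i j, i < j -> phi i < phi j) /\ (forall i j, i <= j -> f (phi i) <= f (phi j)).
Proof.
have next a : exists b, a < b /\ forall c, a < c -> f b <= f c.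
  have [v [[b ab <-] vmin]] := ex_least_nat (ex_intro (fun v => exists2 b, a < b & f b = v)
    (f a.+1) (ex_intro2 _ _ a.+1 (ltnSn a) erefl)).
  by exists b; split=> // c ac; apply: vmin; exists c.
have [g gP] := choice _ next.
pose phi j := iter j.+1 g 0.
have phiS i : phi i < phi i.+1 by rewrite /phi iterS; case: (gP (phi i)).
have phi_incr : forall i j, i < j -> phi i < phi j := homo_ltn ltn_trans phiS.
exists phi; split=> // i j; rewrite leq_eqVlt => /orP[/eqP->//|ij].
by case: (gP (iter i g 0)) => ig; apply; apply: ltn_trans ig (phi_incr _ _ ij).
Qed.

Lemma dickson n (m : nat -> 'X_{1..n}) : exists i j, i < j /\ (m i <= m j)%MM.
Proof.
have sorted_upto t : t <= n -> exists phi : nat -> nat,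
    (forall i j, i < j -> phi i < phi j) /\
    forall (c : 'I_n), c < t -> forall i j, i <= j -> m (phi i) c <= m (phi j) c.
  elim: t => [_|t IH tn]; first by exists id.
  have [phi [phi_incr phi_mono]] := IH (ltnW tn).
  have [psi [psi_incr psi_mono]] := nondecreasing_subsequence (fun j => m (phi j) (Ordinal tn)).
  exists (phi \o psi); split=> [i j /psi_incr /phi_incr //|c].
  rewrite ltnS leq_eqVlt => /orP[/eqP ct|ct] i j ij.
    have -> : c = Ordinal tn by apply: val_inj.
    exact: psi_mono.
  apply: phi_mono ct _ _ _; move: ij; rewrite leq_eqVlt => /orP[/eqP->//|/psi_incr].
  exact: ltnW.
have [phi [phi_incr phi_mono]] := sorted_upto n (leqnn n).
exists (phi 0), (phi 1); split; first exact: phi_incr.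
by apply/mnm_lepP => c; apply: phi_mono.
Qed.

Section NoetherianInduction.
Variables (A : Type) (closed : (A -> Prop) -> Prop).

Definition subpred (B C : A -> Prop) := forall a, B a -> C a.

Definition strict_subpred (B C : A -> Prop) := subpred B C /\ exists a, C a /\ ~ B a.

Definition no_infinite_descent := forall V : nat -> A -> Prop,
  (forall j, closed (V j)) -> (forall j, subpred (V j.+1) (V j)) ->
  ~ (forall j, strict_subpred (V j.+1) (V j)).

Lemma decreasing_chain_le (V : nat -> A -> Prop) :
  (forall j, subpred (V j.+1) (V j)) -> forall i j, i <= j -> subpred (V j) (V i).
Proof.
by move=> VS; apply: (homo_leq (r := fun B C => subpred C B)) => // [B|B C D BC CD] a => [|/CD/BC].
Qed.

Hypothesis closed_wf : no_infinite_descent.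

Lemma decreasing_chain_stationary (V : nat -> A -> Prop) :
  (forall j, closed (V j)) -> (forall j, subpred (V j.+1) (V j)) ->
  exists K, forall j, K <= j -> subpred (V K) (V j).
Proof.
move=> Vc VS; apply: NNPP => not_stat.
have drop K : exists j, K <= j /\ strict_subpred (V j) (V K).
  apply: NNPP => nodrop; apply: not_stat; exists K => j Kj a VKa.
  apply: NNPP => nVj; apply: nodrop; exists j; split=> //.
  by split; [exact: decreasing_chain_le | exists a].
have [g gP] := choice _ drop.
apply: (closed_wf (V := fun j => V (iter j g 0))) => [j|j|j] /=; first exact: Vc.
  all: by case: (gP (iter j g 0)) => _ [].
Qed.

Lemma noetherian_ind (P : (A -> Prop) -> Prop) :
  (forall C, closed C -> (forall B, closed B -> strict_subpred B C -> P B) -> P C) ->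
  forall C, closed C -> P C.
Proof.
move=> IH C Cc; apply: NNPP => nPC.
pose bad D := closed D /\ ~ P D.
have smaller D : exists D', bad D -> bad D' /\ strict_subpred D' D.
  have [[Dc nPD]|] := classic (bad D); last by exists D.
  apply: NNPP => none; apply: nPD; apply: IH => // B Bc BD; apply: NNPP => nPB.
  by apply: none; exists B.
have [g gP] := choice _ smaller.
have chain_bad j : bad (iter j g C) by elim: j => [|j IHj] //=; case: (gP _ IHj).
apply: (closed_wf (V := fun j => iter j g C)) => j; first by case: (chain_bad j).
  by case: (gP _ (chain_bad j)) => _ [].
by case: (gP _ (chain_bad j)).
Qed.

End NoetherianInduction.

Section Ideals.
Variables (F : fieldType) (n : nat).
Local Open Scope ring_scope.

Definition is_ideal (I : {mpoly F[n]} -> Prop) :=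
  [/\ I 0, forall p q, I p -> I q -> I (p + q) & forall r p, I p -> I (r * p)].

Definition lead_monomial (I : {mpoly F[n]} -> Prop) (m : 'X_{1..n}) :=
  exists q, [/\ I q, q != 0 & mlead q = m].

Lemma ideal_sub_of_lead_monomial (I J : {mpoly F[n]} -> Prop) : is_ideal I -> is_ideal J ->
  (forall p, I p -> J p) -> (forall m, lead_monomial J m -> lead_monomial I m) ->
  forall p, J p -> I p.
Proof.
move=> [I0 ID IM] [_ JD JM] IJ leadJI p; elim/mleadrect: p => p IH Jp.
have [->|pn0] := eqVneq p 0; first exact: I0.
have [q [Iq qn0 qp]] : lead_monomial I (mlead p) by apply: leadJI; exists p.
pose c := mleadc p / mleadc q.
have qc : mleadc q != 0 by rewrite mleadc_eq0.
pose p' := p - c *: q.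
have p_split : p = p' + c%:MP * q by rewrite /p' mul_mpolyC subrK.
have Jp' : J p' by rewrite /p' -mul_mpolyC -mulN1r mulrA; apply: JD => //; apply/JM/IJ.
rewrite p_split; apply: ID; last exact: IM.
have [->|p'n0] := eqVneq p' 0; first exact: I0.
apply: IH Jp'; rewrite lt_neqAle; apply/andP; split.
  (* the leading terms of p and c *: q cancel *)
  apply/eqP => e; move: p'n0; rewrite -mleadc_eq0 e /p' mcoeffB mcoeffZ -qp /c.
  by rewrite divfK // qp subrr eqxx.
apply: le_trans (mleadB_le _ _) _; rewrite leUx lexx /=.
by apply: le_trans (mleadZ_le _ _) _; rewrite qp.
Qed.

Lemma increasing_ideal_chain_not_strict (I : nat -> {mpoly F[n]} -> Prop) :
  (forall j, is_ideal (I j)) -> (forall j p, I j p -> I j.+1 p) ->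
  ~ (forall j, exists p, I j.+1 p /\ ~ I j p).
Proof.
move=> Iideal IS strict.
have new_lead j : exists m, lead_monomial (I j.+1) m /\ ~ lead_monomial (I j) m.
  apply: NNPP => none; have [p [Ip nIp]] := strict j; apply: nIp.
  apply: (ideal_sub_of_lead_monomial (Iideal j) (Iideal j.+1) (IS j)) Ip => m Lm.
  by apply: NNPP => nLm; apply: none; exists m.
have [m mP] := choice _ new_lead.
have [i [j [ij mij]]] := dickson m.
have [_ []] := mP j; have [[q [Iq qn0 qm]] _] := mP i.
have Xn0 : 'X_[(m j - m i)%MM] != 0 :> {mpoly F[n]} by rewrite -msupp_eq0 msuppX.
exists ('X_[(m j - m i)%MM] * q); split.
- have chain_le : forall a b, (a <= b)%N -> forall p, I a p -> I b p.
    by apply: (homo_leq (r := fun B C => forall p, B p -> C p)) => // B C D BC CD p /BC/CD.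
  by case: (Iideal j) => _ _; apply; apply: chain_le Iq.
- by rewrite mulf_eq0 negb_or qn0 Xn0.
- by rewrite mleadM // mleadXm qm submK.
Qed.

End Ideals.

Section Zariski.
Variables (k : closedFieldType) (n : nat).
Local Open Scope ring_scope.
Implicit Types A B V : kn k n -> Prop.

Definition vanishing V (p : {mpoly k[n]}) := forall w, V w -> p.@[w] = 0.

Lemma vanishing_ideal V : is_ideal (vanishing V).
Proof.
split=> [w _|p q Hp Hq w Vw|r p Hp w Vw]; first by rewrite meval0.
  by rewrite mevalD Hp ?Hq ?addr0.
by rewrite mevalM Hp ?mulr0.
Qed.

Lemma zclosed_vanishingP V : zclosed V ->
  forall v, V v <-> forall p, vanishing V p -> p.@[v] = 0.
Proof.
case=> P PV v; split=> [Vv p|vanish]; first exact.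
by apply/PV => p Pp; apply: vanish => w /PV; apply.
Qed.

Lemma zclosed_no_infinite_descent : no_infinite_descent (@zclosed k n).
Proof.
move=> V Vc VS strict.
apply: (increasing_ideal_chain_not_strict (I := fun j => vanishing (V j))).
- by move=> j; apply: vanishing_ideal.
- by move=> j p Vp w /VS; apply: Vp.
move=> j; have [_ [v [Vv nVv]]] := strict j.
apply: NNPP => none; apply: nVv; apply/(zclosed_vanishingP (Vc j.+1)) => p Vp.
by apply: NNPP => pv; apply: none; exists p; split=> // Vjp; apply: pv; apply: Vjp.
Qed.

Lemma zclosed_ext A B : (forall v, A v <-> B v) -> zclosed A -> zclosed B.
Proof. by move=> AB [P PA]; exists P => v; rewrite -AB. Qed.

Lemma zclosed0 : zclosed (fun _ : kn k n => False).
Proof.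
exists (fun p => p = 1) => v; split=> [[]|/(_ 1 erefl)] //.
by rewrite meval1 => /eqP; rewrite oner_eq0.
Qed.

Lemma zclosedI A B : zclosed A -> zclosed B -> zclosed (fun v => A v /\ B v).
Proof.
case=> P PA [Q QB]; exists (fun p => P p \/ Q p) => v; split.
  by case=> /PA Av /QB Bv p [/Av|/Bv].
by move=> vanish; split; [apply/PA|apply/QB] => p Hp; apply: vanish; [left|right].
Qed.

(* The union is cut out by the pairwise products of the equations. *)
Lemma zclosedU A B : zclosed A -> zclosed B -> zclosed (fun v => A v \/ B v).
Proof.
case=> P PA [Q QB]; exists (fun r => exists p q, [/\ P p, Q q & r = p * q]) => v; split.
  case=> [/PA Av|/QB Bv] _ [p [q [Pp Qq ->]]]; rewrite mevalM.
    by rewrite (Av p Pp) mul0r.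
  by rewrite (Bv q Qq) mulr0.
move=> vanish; apply: NNPP => nAB.
have [p [Pp pv]] : exists p, P p /\ p.@[v] <> 0.
  apply: NNPP => h; apply: nAB; left; apply/PA => p Pp.
  by apply: NNPP => pv; apply: h; exists p.
have [q [Qq qv]] : exists q, Q q /\ q.@[v] <> 0.
  apply: NNPP => h; apply: nAB; right; apply/QB => q Qq.
  by apply: NNPP => qv; apply: h; exists q.
have /eqP := vanish (p * q) (ex_intro _ p (ex_intro _ q (And3 Pp Qq erefl))).
by rewrite mevalM mulf_eq0 => /orP[/eqP|/eqP].
Qed.

End Zariski.

Section Concat.
Variables (k : closedFieldType) (a b : nat).
Local Open Scope ring_scope.

Lemma kconcat_inj (u u' : kn k a) (w w' : kn k b) :
  kconcat u w = kconcat u' w' -> u = u' /\ w = w'.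
Proof.
move=> e; split; apply: functional_extensionality => i.
  by have := congr1 (fun f => f (unsplit (inl i))) e; rewrite /kconcat unsplitK.
by have := congr1 (fun f => f (unsplit (inr i))) e; rewrite /kconcat unsplitK.
Qed.

(* Substituting the constants of [c] for the first [a] variables. *)
Lemma zclosed_slice (A : kn k (a + b) -> Prop) (c : kn k a) :
  zclosed A -> zclosed (fun w : kn k b => A (kconcat c w)).
Proof.
case=> P PA.
pose lq : (a + b).-tuple {mpoly k[b]} :=
  [tuple match split i with inl j => (c j)%:MP | inr j => 'X_j end | i < a + b].
have comp_eval p w : (p \mPo lq).@[w] = p.@[kconcat c w].
  rewrite comp_mpoly_meval; apply: meval_eq => i.
  by rewrite tnth_mktuple /kconcat; case: (split i) => j; rewrite ?mevalC ?mevalXU.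
exists (fun q => exists2 p, P p & q = p \mPo lq) => w; split.
  by move/PA => vanish _ [p Pp ->]; rewrite comp_eval; apply: vanish.
by move=> vanish; apply/PA => p Pp; rewrite -comp_eval; apply: vanish; exists p.
Qed.

End Concat.

Lemma iter_finite_stationary (T : finType) (f : T -> T) (i : T) :
  exists2 M, 0 < M & forall j, 0 < j -> iter (M * j).-1 f i = iter M.-1 f i.
Proof.
have [a [b [ab iter_ab]]] : exists a b, a < b /\ iter a f i = iter b f i.
  have : ~~ injectiveb (fun a : 'I_#|T|.+1 => iter a f i).
    by apply/injectiveP => /leq_card; rewrite card_ord ltnn.
  case/injectivePn => u [v /eqP uv e].
  case: (ltngtP u v) => [lt|lt|/val_inj //]; first by exists u, v.
  by exists v, u.
pose p := b - a.
have periodic t c : a <= c -> iter (c + t * p) f i = iter c f i.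
  move=> ac; elim: t => [|t IH]; first by rewrite addn0.
  have -> : c + t.+1 * p = (c - a + t * p) + b by rewrite /p; lia.
  by rewrite iterD -iter_ab -iterD addnAC subnK.
exists (p * a.+1); first by rewrite muln_gt0 subn_gt0 ab.
move=> j j_gt0; have Ma : a < p * a.+1 by rewrite leq_pmull // subn_gt0.
have -> : (p * a.+1 * j).-1 = (p * a.+1).-1 + (j.-1 * a.+1) * p.
  by rewrite -(prednK j_gt0); nia.
by apply: periodic; lia.
Qed.

Section Variety.
Variables (k : closedFieldType) (S : Type) (X : variety k S).
Local Notation dom := (cdom k S X).
Local Notation ch := (chart k S X).
Local Notation nch := (ncharts k S X).
Local Notation dim := (cdim k S X).
Local Notation ch_inj := (chart_inj k S X).
Implicit Types A B C Y : S -> Prop.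

Definition chart_trace (i : 'I_nch) C : kn k (dim i) -> Prop :=
  fun v => exists s, [/\ dom i s, C s & ch i s = v].
Arguments chart_trace : clear implicits.

Lemma chart_traceP i C s : dom i s -> chart_trace i C (ch i s) <-> C s.
Proof.
move=> ds; split=> [[t [dt Ct /(ch_inj i t s dt ds) <-]] //|Cs].
by exists s.
Qed.

Lemma chart_traceC i C v :
  chart_trace i (fun s => ~ C s) v <-> chimg (dom i) (ch i) v /\ ~ chart_trace i C v.
Proof.
split=> [[s [ds nCs <-]]|[[s ds <-]]]; first by split; [exists s | rewrite chart_traceP].
by rewrite !chart_traceP.
Qed.

Lemma vclosedP C : vclosed X C <-> forall i, zclosed (chart_trace i C).
Proof.
split=> Cc i.
  have [W [Wo traceW]] := Cc i.
  apply: zclosed_ext (zclosedI (cimg_closed k S X i) Wo) => v; split.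
    case=> imv nWv; apply: NNPP => nCv; apply: nWv.
    by have /traceW [] : chart_trace i (fun s => ~ C s) v by apply/chart_traceC.
  move=> Cv; have imv : chimg (dom i) (ch i) v by case: Cv => s [ds _ <-]; exists s.
  split=> // Wv.
  by have /chart_traceC [_] : chart_trace i (fun s => ~ C s) v by apply/traceW.
exists (fun v => ~ chart_trace i C v); split=> [|v]; last exact: chart_traceC.
by apply: zclosed_ext (Cc i) => v; split=> [Cv /(_ Cv)|/NNPP].
Qed.

Lemma vclosed_ext A B : (forall s, A s <-> B s) -> vclosed X A -> vclosed X B.
Proof.
move=> AB /vclosedP Ac; apply/vclosedP => i; apply: zclosed_ext (Ac i) => v.
by split=> -[s [ds Cs <-]]; exists s; split=> //; apply/AB.
Qed.

Lemma vclosed0 : vclosed X (fun _ => False).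
Proof.
by apply/vclosedP => i; apply: zclosed_ext (zclosed0 _ _) => v; split=> // -[s []].
Qed.

Lemma vclosedT : vclosed X (fun _ => True).
Proof.
apply/vclosedP => i; apply: zclosed_ext (cimg_closed k S X i) => v.
by split=> [[s ds <-]|[s [ds _ <-]]]; exists s.
Qed.

Lemma vclosedU A B : vclosed X A -> vclosed X B -> vclosed X (fun s => A s \/ B s).
Proof.
move=> /vclosedP Ac /vclosedP Bc; apply/vclosedP => i.
apply: zclosed_ext (zclosedU (Ac i) (Bc i)) => v; split.
  by case=> -[s [ds Cs <-]]; exists s; split=> //; [left|right].
by case=> s [ds [As|Bs] <-]; [left|right]; exists s.
Qed.

Lemma vclosedI A B : vclosed X A -> vclosed X B -> vclosed X (fun s => A s /\ B s).
Proof.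
move=> /vclosedP Ac /vclosedP Bc; apply/vclosedP => i.
apply: zclosed_ext (zclosedI (Ac i) (Bc i)) => v; split; last first.
  by case=> s [ds ABs <-]; rewrite !chart_traceP.
by case=> -[s [ds As <-]] /chart_traceP-/(_ ds) Bs; exists s.
Qed.

Lemma vclosed_big r (A : 'I_r -> S -> Prop) :
  (forall l, vclosed X (A l)) -> vclosed X (fun s => exists l, A l s).
Proof.
elim: r A => [|r IH] A Ac.
  by apply: vclosed_ext vclosed0 => s; split=> // -[[]].
apply: vclosed_ext (vclosedU (Ac ord_max) (IH _ (fun j => Ac (lift ord_max j)))) => s.
split=> [[Amax|[j Aj]]|[l]]; [by exists ord_max | by exists (lift ord_max j) |].
by case: (unliftP ord_max l) => [j ->|->] Al; [right; exists j | left].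
Qed.

Lemma vclosed_no_infinite_descent : no_infinite_descent (vclosed X).
Proof.
move=> V Vc VS strict.
have stationary i : exists K, forall j, K <= j ->
    subpred (chart_trace i (V K)) (chart_trace i (V j)).
  apply: decreasing_chain_stationary (@zclosed_no_infinite_descent k (dim i)) _ _ _.
    by move=> j; move/vclosedP: (Vc j).
  by move=> j v [s [ds Vs <-]]; exists s; split=> //; apply: VS.
have [K KP] := choice _ stationary.
pose M := \max_(i < nch) K i.
have [_ [s [VMs nVs]]] := strict M.
have [i ds] := cdom_cover k S X s.
have KM : K i <= M := leq_bigmax i.
apply: nVs; apply/(chart_traceP _ ds)/(KP i M.+1 (leqW KM)); apply/chart_traceP => //.
exact: decreasing_chain_le VS _ _ KM s VMs.
Qed.

Definition virr Y := forall A B, vclosed X A -> vclosed X B ->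
  (forall s, Y s -> A s \/ B s) -> subpred Y A \/ subpred Y B.

Lemma virr_sub_big r Y (A : 'I_r -> S -> Prop) : virr Y -> (forall l, vclosed X (A l)) ->
  0 < r -> (forall s, Y s -> exists l, A l s) -> exists l, subpred Y (A l).
Proof.
move=> Yirr; elim: r A => // r IH A Ac _ cover.
have cover' s : Y s -> A ord_max s \/ exists j, A (lift ord_max j) s.
  by move/cover=> [l]; case: (unliftP ord_max l) => [j ->|->] Al; [right; exists j | left].
have [YA|YA'] := Yirr _ _ (Ac ord_max) (vclosed_big (fun j => Ac (lift ord_max j))) cover'.
  by exists ord_max.
case: r IH A Ac YA' {cover cover'} => [|r] IH A Ac YA'.
  by exists ord_max => s /YA' [[]].
by have [j Yj] := IH _ (fun j => Ac _) isT YA'; exists (lift ord_max j).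
Qed.

Definition finite_irr_union C := exists r (Y : 'I_r -> S -> Prop),
  (forall l, vclosed X (Y l) /\ virr (Y l)) /\ forall s, C s <-> exists l, Y l s.

Lemma finite_irr_unionU A B : finite_irr_union A -> finite_irr_union B ->
  finite_irr_union (fun s => A s \/ B s).
Proof.
move=> [r1 [Y1 [Y1P AY1]]] [r2 [Y2 [Y2P BY2]]].
exists (r1 + r2), (fun l => match split l with inl a => Y1 a | inr b => Y2 b end).
split=> [l|s]; first by case: (split l).
rewrite AY1 BY2; split.
  by case=> -[l Yl]; [exists (lshift r2 l) | exists (rshift r1 l)];
    rewrite (unsplitK (inl _)) || rewrite (unsplitK (inr _)).
by case=> l; case: (split l) => [a|b] Yl; [left; exists a | right; exists b].
Qed.

Lemma vclosed_finite_irr_union C : vclosed X C -> finite_irr_union C.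
Proof.
apply: (noetherian_ind vclosed_no_infinite_descent) => {}C Cc IH.
have [Cirr|] := classic (virr C).
  by exists 1, (fun _ => C); split=> // s; split=> [Cs|[]//]; exists ord0.
move=> Cred; have [A [B [Ac Bc cover [nCA nCB]]]] : exists A B, [/\ vclosed X A, vclosed X B,
    forall s, C s -> A s \/ B s & ~ subpred C A /\ ~ subpred C B].
  apply: NNPP => none; apply: Cred => A B Ac Bc cover.
  by apply: NNPP => nsub; apply: none; exists A, B; split=> //; tauto.
have piece D : vclosed X D -> ~ subpred C D -> finite_irr_union (fun s => C s /\ D s).
  move=> Dc nCD; apply: IH; first exact: vclosedI.
  split=> [s []//|]; apply: NNPP => none; apply: nCD => s Cs.
  by apply: NNPP => nDs; apply: none; exists s; split=> // -[].
have [r [Y [YP CY]]] := finite_irr_unionU (piece A Ac nCA) (piece B Bc nCB).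
exists r, Y; split=> // s; rewrite -CY.
by split=> [Cs|]; [case: (cover s Cs); tauto | tauto].
Qed.

Lemma pimg_chartP i j (P : S -> S -> Prop) s t : dom i s -> dom j t ->
  pimg k S X i j P (kconcat (ch i s) (ch j t)) <-> P s t.
Proof.
move=> ds dt; split=> [[s' [t' [ds' dt' Pst /kconcat_inj [es et]]]]|Pst].
  by rewrite -(ch_inj _ _ _ ds' ds es) -(ch_inj _ _ _ dt' dt et).
by exists s, t.
Qed.

Lemma vclosed_lmul (mu : S -> S -> S) x C :
  vmorphism2 X mu -> vclosed X C -> vclosed X (fun t => C (mu x t)).
Proof.
move=> [mu_cont _] Cc; apply/vclosedP => l.
have [i dx] := cdom_cover k S X x.
have [W [Wo traceW]] := mu_cont _ Cc i l.
pose c := ch i x.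
apply: zclosed_ext (zclosedI (cimg_closed k S X l) (zclosed_slice c Wo)) => w.
split=> [[[t dt <-] nW]|[t [dt Ct <-]]].
  exists t; split=> //; apply: NNPP => nC; apply: nW.
  by have /traceW [] : pimg k S X i l (fun s t => ~ C (mu s t)) (kconcat c (ch l t))
    by apply/pimg_chartP.
split; first by exists t.
move=> Wv; have /pimg_chartP [] // : pimg k S X i l (fun s t => ~ C (mu s t)) (kconcat c (ch l t)).
by apply/traceW; split=> //; apply/pimg_chartP.
Qed.

End Variety.

Theorem lemma1 (k : closedFieldType) (S : Type) (X : variety k S)
  (mu : S -> S -> S) (HS : algebraic_semigroup X mu) (x : S)
  (Hx : forall n : nat, (0 < n)%N -> forall s : S, cyc_closure X mu x n s) :
  vdense X (fun s => exists t, s = mu x t) /\ virreducible X.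
Proof.
case: HS => _ mu_morph; split.
  move=> s C Cc xS_C; apply: (Hx 2 isT s C Cc) => _ [[|j] // _ ->].
  by apply: xS_C; rewrite mulnS /spow /=; eexists.
split=> [|C1 C2 C1c C2c cover]; first by exists x.
have [r [Y [YP SY]]] := vclosed_finite_irr_union (@vclosedT _ _ X).
have [i0 Yx] : exists i, Y i x by apply/SY.
have step i : exists l, subpred (Y i) (fun s => Y l (mu x s)).
  apply: virr_sub_big (proj2 (YP i)) (fun l => vclosed_lmul x mu_morph (proj1 (YP l))) _ _.
    by case: i0 {Yx} => j /(leq_ltn_trans (leq0n j)).
  by move=> s _; apply/SY.
have [sigma sigmaP] := choice _ step.
have iterP m i s : Y i s -> Y (iter m sigma i) (iter m (mu x) s).
  by elim: m i s => [//|m IH] i s /IH /sigmaP.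
have [M M_gt0 stationary] := iter_finite_stationary sigma i0.
have Y_full s : Y (iter M.-1 sigma i0) s.
  apply: (Hx M M_gt0 s); first exact: (proj1 (YP _)).
  by move=> _ [j j_gt0 ->]; rewrite -(stationary j j_gt0); apply: iterP.
have [] := proj2 (YP (iter M.-1 sigma i0)) C1 C2 C1c C2c (fun s _ => cover s) => YC;
  [left|right] => s; exact: YC s (Y_full s).
Qed.
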